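(* Let $G$ be a finite graph and let $(\mathcal{P}_1,R_1),\dots,(\mathcal{P}_m,R_m)$ be a minimal merge sequence for $G$. Let $i\in\{1,\dots,m\}$, let $X,Y\in\mathcal{P}_i$ (possibly $X=Y$), and let $x_1,x_2\in X$ and $y_1,y_2\in Y$ be such that $\{x_1,y_1\}$ and $\{x_2,y_2\}$ are pairs of distinct vertices which are both not in $R_i$. Then for every $j\in\{1,\dots,m\}$, the pairs $\{x_1,y_1\}$ and $\{x_2,y_2\}$ are either both in $R_j$ or both not in $R_j$.
   Context: A merge sequence for a graph $G=(V,E)$ is a sequence $(\mathcal{P}_1,R_1),\dots,(\mathcal{P}_m,R_m)$ where: (1) each $\mathcal{P}_i$ is a partition of $V$, $\mathcal{P}_1$ is the partition into singletons, $\mathcal{P}_m=\{V\}$, and each part of $\mathcal{P}_i$ is a union of parts of $\mathcal{P}_{i-1}$; (2) $R_1\subseteq\dots\subseteq R_m\subseteq\binom{V}{2}$ are sets of unordered pairs of distinct vertices (resolved pairs); (3) for any two (possibly equal) parts $A,B\in\mathcal{P}_i$, the pairs $\{a,b\}$ with $a\in A$, $b\in B$, $a\neq b$, not in $R_i$ are either all edges or all non-edges of $G$. A merge sequence is minimal for $G$ if there is no different sequence $R'_1,\dots,R'_m$ such that $(\mathcal{P}_1,R'_1),\dots,(\mathcal{P}_m,R'_m)$ is a merge sequence for $G$ and $R'_i\subseteq R_i$ for all $i$. *)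

From mathcomp Require Import all_boot.
Set Implicit Arguments. Unset Strict Implicit. Unset Printing Implicit Defensive.

(* A finite simple graph: vertex set a finType T, adjacency e : rel T
   (assumed symmetric and irreflexive in the theorem).
   An unordered pair {a,b} of distinct vertices is the 2-element set [set a; b].
   A merge sequence (P_1,R_1),...,(P_m,R_m) is encoded 0-based:
   P i, R i for i = 0, ..., m-1. *)

Definition is_pair (T : finType) (p : {set T}) : bool := #|p| == 2.

Definition merge_seq (T : finType) (e : rel T)
    (P R : nat -> {set {set T}}) (m : nat) : Prop :=
  0 < m /\
      (forall i, i < m -> partition (P i) [set: T]) /\
      (P 0 = [set [set x] | x : T]) /\
      (P m.-1 = [set [set: T]]) /\
      (forall i, 0 < i < m -> forall A, A \in P i ->
          exists S : {set {set T}}, S \subset P i.-1 /\ A = cover S) /\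
      (forall i, i < m -> forall p, p \in R i -> is_pair p) /\
      (forall i j, i <= j -> j < m -> R i \subset R j) /\
      (forall i, i < m -> forall A B, A \in P i -> B \in P i ->
        forall a1 b1 a2 b2, a1 \in A -> b1 \in B -> a2 \in A -> b2 \in B ->
          a1 != b1 -> a2 != b2 ->
          [set a1; b1] \notin R i -> [set a2; b2] \notin R i ->
          e a1 b1 = e a2 b2).

Definition minimal_merge_seq (T : finType) (e : rel T)
    (P R : nat -> {set {set T}}) (m : nat) : Prop :=
  merge_seq e P R m /\
  forall R' : nat -> {set {set T}},
    merge_seq e P R' m ->
    (forall i, i < m -> R' i \subset R i) ->
    forall i, i < m -> R' i = R i.

From mathcomp Require Import all_boot.
Set Implicit Arguments. Unset Strict Implicit. Unset Printing Implicit Defensive.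

(* Suppose {x1,y1} and {x2,y2} are unresolved at step i, with x1, x2 in one
   part and y1, y2 in another, but some R_j contains {x1,y1} and not {x2,y2}.
   Delete {x1,y1} from every R_k not containing {x2,y2}.  Nesting survives,
   since the steps resolving {x2,y2} form a final segment.  Homogeneity
   survives: a step k where {x1,y1} is newly unresolved comes after i, so x2
   (resp. y2) still lies in the part of x1 (resp. y1), and {x2,y2}, which is
   unresolved at k and has the same adjacency, can stand in for {x1,y1}.  The
   result is a strictly smaller merge sequence, contradicting minimality. *)

Lemma set2_eq_orient (T : finType) (a b x y : T) :
  a != b -> [set a; b] = [set x; y] -> (a = x /\ b = y) \/ (a = y /\ b = x).
Proof.
move=> + eq_ab_xy.
have /set2P[] : a \in [set x; y] by rewrite -eq_ab_xy set21.
all: have /set2P[] : b \in [set x; y] by rewrite -eq_ab_xy set22.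
all: by move=> -> ->; rewrite ?eqxx; auto.
Qed.

Section RefiningPartitions.

Variables (T : finType) (P : nat -> {set {set T}}) (m : nat).
Hypothesis P_partition : forall i, i < m -> partition (P i) [set: T].
Hypothesis P_refine : forall i, 0 < i < m -> forall A, A \in P i ->
  exists S : {set {set T}}, S \subset P i.-1 /\ A = cover S.

Lemma block_uniq k (A B : {set T}) u :
  k < m -> A \in P k -> B \in P k -> u \in A -> u \in B -> A = B.
Proof.
move=> lt_km PA PB uA uB; have /and3P[_ trivP _] := P_partition lt_km.
by rewrite -(def_pblock trivP PA uA) -(def_pblock trivP PB uB).
Qed.

Lemma mem_block_later i k (X A : {set T}) u v :
  i <= k -> k < m -> X \in P i -> A \in P k ->
  u \in X -> v \in X -> u \in A -> v \in A.
Proof.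
move=> /subnKC <- + PX + uX vX; elim: (k - i) A => [|d IHd] A lt_km PA uA.
  by rewrite addn0 in lt_km PA *; rewrite (block_uniq lt_km PA PX uA uX).
rewrite addnS in lt_km PA.
have [S [subSP defA]] := @P_refine (i + d).+1 lt_km A PA.
move: uA; rewrite defA => /bigcupP[B SB uB]; apply/bigcupP; exists B => //.
exact: IHd (ltnW lt_km) (subsetP subSP _ SB) uB.
Qed.

End RefiningPartitions.

Definition homogeneous (T : finType) (e : rel T) (Rk : {set {set T}})
    (A B : {set T}) : Prop :=
  forall a1 b1 a2 b2, a1 \in A -> b1 \in B -> a2 \in A -> b2 \in B ->
    a1 != b1 -> a2 != b2 ->
    [set a1; b1] \notin Rk -> [set a2; b2] \notin Rk -> e a1 b1 = e a2 b2.

Lemma homogeneous_transfer (T : finType) (e : rel T) (Rk Rk' : {set {set T}})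
    (A B : {set T}) :
  homogeneous e Rk A B ->
  (forall a b, a \in A -> b \in B -> a != b -> [set a; b] \notin Rk' ->
     exists c d, [/\ c \in A, d \in B, c != d, [set c; d] \notin Rk
                   & e a b = e c d]) ->
  homogeneous e Rk' A B.
Proof.
move=> homR witness a1 b1 a2 b2 a1A b1B a2A b2B ne1 ne2 un1 un2.
have [c1 [d1 [c1A d1B ne_cd1 un_cd1 ->]]] := witness a1 b1 a1A b1B ne1 un1.
have [c2 [d2 [c2A d2B ne_cd2 un_cd2 ->]]] := witness a2 b2 a2A b2B ne2 un2.
exact: homR.
Qed.

Section UnresolveUntil.

Variables (T : finType) (R : nat -> {set {set T}}) (p q : {set T}).

Definition unresolve_until k : {set {set T}} :=
  if q \in R k then R k else R k :\ p.

Lemma unresolve_until_sub k : unresolve_until k \subset R k.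
Proof. by rewrite /unresolve_until; case: ifP => _; rewrite ?subsetDl. Qed.

Lemma unresolve_untilP k r :
  r \in R k -> r \notin unresolve_until k -> r = p /\ q \notin R k.
Proof.
rewrite /unresolve_until; case: ifP => [_ -> // | _ Rr].
by rewrite in_setD1 Rr andbT negbK => /eqP.
Qed.

Lemma unresolve_until_id k :
  unresolve_until k = R k -> p \in R k -> q \in R k.
Proof.
rewrite /unresolve_until; case: ifP => // _ /setP/(_ p).
by rewrite in_setD1 eqxx /= => <-.
Qed.

Lemma unresolve_until_nested m :
  (forall i j, i <= j -> j < m -> R i \subset R j) ->
  forall i j, i <= j -> j < m -> unresolve_until i \subset unresolve_until j.
Proof.
move=> R_nested i j le_ij lt_jm; have subR := R_nested i j le_ij lt_jm.
rewrite /unresolve_until; case: ifP => [Rq_i | _].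
  by rewrite (subsetP subR q Rq_i).
case: ifP => _; first exact: subset_trans (subsetDl _ _) subR.
exact: setSD.
Qed.

End UnresolveUntil.

Section MinimalMergeSequence.

Variables (T : finType) (e : rel T) (P R : nat -> {set {set T}}) (m : nat).
Hypothesis e_sym : symmetric e.
Hypothesis R_minimal : minimal_merge_seq e P R m.

Variables (i : nat) (X Y : {set T}) (x1 x2 y1 y2 : T).
Hypotheses (lt_im : i < m) (PX : X \in P i) (PY : Y \in P i).
Hypotheses (x1X : x1 \in X) (x2X : x2 \in X) (y1Y : y1 \in Y) (y2Y : y2 \in Y).
Hypotheses (ne_xy1 : x1 != y1) (ne_xy2 : x2 != y2).
Hypotheses (un_i1 : [set x1; y1] \notin R i) (un_i2 : [set x2; y2] \notin R i).

Let R' := unresolve_until R [set x1; y1] [set x2; y2].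

Lemma unresolve_until_witness k (A B : {set T}) a b :
  k < m -> A \in P k -> B \in P k -> a \in A -> b \in B -> a != b ->
  [set a; b] \notin R' k ->
  exists c d, [/\ c \in A, d \in B, c != d, [set c; d] \notin R k
                & e a b = e c d].
Proof.
have [_ [P_partition [_ [_ [P_refine [_ [R_nested R_hom]]]]]]] := R_minimal.1.
move=> lt_km PA PB aA bB ne_ab un_ab.
case Rab: ([set a; b] \in R k); last by exists a, b; rewrite Rab.
have [eq_ab un_k2] := unresolve_untilP Rab un_ab.
have le_ik : i <= k.
  rewrite leqNgt; apply: contraNN un_i1 => lt_ki.
  by rewrite -eq_ab (subsetP (R_nested k i (ltnW lt_ki) lt_im)).
have eq_xy1 : e x1 y1 = e x2 y2 by apply: (R_hom i lt_im X Y PX PY).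
have later Z C u v :
    Z \in P i -> C \in P k -> u \in Z -> v \in Z -> u \in C -> v \in C :=
  mem_block_later P_partition P_refine le_ik lt_km.
have [[ea eb] | [ea eb]] := set2_eq_orient ne_ab eq_ab; subst a b.
  exists x2, y2; split => //; first exact: later _ _ _ _ PX PA x1X x2X aA.
  exact: later _ _ _ _ PY PB y1Y y2Y bB.
exists y2, x2; split; first exact: later _ _ _ _ PY PA y1Y y2Y aA.
- exact: later _ _ _ _ PX PB x1X x2X bB.
- by rewrite eq_sym.
- by rewrite setUC.
- by rewrite e_sym eq_xy1 e_sym.
Qed.

Lemma unresolve_until_merge_seq : merge_seq e P R' m.
Proof.
have [m_gt0 [P_partition [P0 [Plast [P_refine [R_pair [R_nested R_hom]]]]]]] :=
  R_minimal.1.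
do 5 (split; first by []); split.
  by move=> k lt_km r /(subsetP (unresolve_until_sub _ _ _ _)); apply: R_pair.
split; first exact: unresolve_until_nested.
move=> k lt_km A B PA PB; apply: homogeneous_transfer (R_hom k lt_km A B PA PB) _.
by move=> a b; apply: unresolve_until_witness.
Qed.

Lemma resolved_together j :
  j < m -> [set x1; y1] \in R j -> [set x2; y2] \in R j.
Proof.
move=> lt_jm; apply: unresolve_until_id.
apply: R_minimal.2 lt_jm; first exact: unresolve_until_merge_seq.
by move=> k _; apply: unresolve_until_sub.
Qed.

End MinimalMergeSequence.

Theorem lemma2p1 (T : finType) (e : rel T)
    (e_sym : symmetric e) (e_irr : irreflexive e)
    (P R : nat -> {set {set T}}) (m : nat) :
  minimal_merge_seq e P R m ->
  forall i, i < m ->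
  forall X Y, X \in P i -> Y \in P i ->
  forall x1 x2 y1 y2, x1 \in X -> x2 \in X -> y1 \in Y -> y2 \in Y ->
  x1 != y1 -> x2 != y2 ->
  [set x1; y1] \notin R i -> [set x2; y2] \notin R i ->
  forall j, j < m -> ([set x1; y1] \in R j) = ([set x2; y2] \in R j).
Proof.
move=> R_min i lt_im X Y PX PY x1 x2 y1 y2 x1X x2X y1Y y2Y ne1 ne2 un1 un2 j lt_jm.
apply/idP/idP.
  exact: (resolved_together e_sym R_min lt_im PX PY x1X x2X y1Y y2Y ne1 ne2 un1 un2 lt_jm).
exact: (resolved_together e_sym R_min lt_im PX PY x2X x1X y2Y y1Y ne2 ne1 un2 un1 lt_jm).
Qed.
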